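(* Let $n=2$ and let $\mathcal M_1=\begin{pmatrix}\frac12&\frac12\\ \frac12&\frac12\end{pmatrix}$ and $\mathcal M_2=\begin{pmatrix}\frac{9}{10}&\frac{1}{10}\\ \frac1{10}&\frac9{10}\end{pmatrix}$. Then (i) there is a directed $3$-regular multigraph on $[2]$ whose throughput with respect to $\mathcal M_1$ is at least $\frac89$, but no directed $3$-regular multigraph on $[2]$ has weak direct throughput with respect to $\mathcal M_1$ greater than $\frac56$; and (ii) there is a directed $3$-regular multigraph on $[2]$ whose weak direct throughput with respect to $\mathcal M_2$ is at least $\frac9{10}$, but no directed $3$-regular multigraph on $[2]$ has throughput with respect to $\mathcal M_2$ at least $\frac9{10}$.
   Context: Let $n\ge 1$ and $[n]=\{1,\dots,n\}$. Networks are finite directed multigraphs on vertex set $[n]$; self-loops and parallel arcs are allowed. A directed multigraph is directed $r$-regular if every vertex has exactly $r$ outgoing and exactly $r$ incoming arcs (a self-loop at $v$ counts as one outgoing and one incoming arc of $v$). A path is a non-empty sequence of arcs $((u_1,v_1),\dots,(u_\ell,v_\ell))$ with $v_i=u_{i+1}$ for $i<\ell$; it goes from $u_1$ to $v_\ell$ and has length $\ell\ge 1$. An $n\times n$ matrix is doubly stochastic if all entries are nonnegative and every row and every column sums to $1$. In a directed $(2n-1)$-regular multigraph $G$ on $[n]$ every arc has capacity $\frac{1}{2n-1}$. $G$ hosts a nonnegative $n\times n$ matrix $\mathcal M=(a_{i,j})$ if there is a finite collection $\{(P_k,d_k)\}$, where each $P_k$ is a path in $G$ from some $s_k$ to some $t_k$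 and $d_k\ge 0$, such that $\sum_{k:\,s_k=u,\,t_k=v} d_k=a_{u,v}$ for all $u,v\in[n]$, and for every arc $e$ of $G$ (parallel arcs are distinct) $\sum_{k:\,e\in P_k} d_k\le \frac{1}{2n-1}$. $G$ directly hosts $\mathcal M$ if this is possible with all paths $P_k$ of length $1$. For doubly stochastic $\mathcal M=(a_{i,j})$: the throughput of $G$ is the largest $\theta$ such that $G$ hosts $\theta\mathcal M$; the weak direct throughput of $G$ is the largest $\eta$ such that $G$ directly hosts some matrix $\mathcal M'=(a'_{i,j})$ with $0\le a'_{i,j}\le a_{i,j}$ for all $i,j$ and $\sum_{i,j}a'_{i,j}=\eta n$. *)

From HB Require Import structures.
From mathcomp Require Import all_boot all_order all_algebra.
From mathcomp Require Import classical_sets reals.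
Unset Printing Implicit Defensive.
Import Order.TTheory GRing.Theory Num.Theory.
Local Open Scope ring_scope.

(* A directed multigraph on [n] (vertices 'I_n) is a finite list of arcs
   (u, v); parallel arcs are distinct list positions, self-loops allowed. *)
Definition multigraph (n : nat) := seq ('I_n * 'I_n).

Definition dregular {n} (G : multigraph n) (r : nat) : Prop :=
  forall v : 'I_n, count (fun a => a.1 == v) G = r /\ count (fun a => a.2 == v) G = r.

Definition arc {n} (G : multigraph n) (e : 'I_(size G)) : 'I_n * 'I_n :=
  tnth (in_tuple G) e.

Definition is_path {n} (G : multigraph n) (e0 : 'I_(size G)) (es : seq 'I_(size G)) : bool :=
  path (fun e f => (arc G e).2 == (arc G f).1) e0 es.
Definition path_src {n} (G : multigraph n) (e0 : 'I_(size G)) (es : seq 'I_(size G)) :=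
  (arc G e0).1.
Definition path_tgt {n} (G : multigraph n) (e0 : 'I_(size G)) (es : seq 'I_(size G)) :=
  (arc G (last e0 es)).2.

(* capacity of each arc in a (2n-1)-regular multigraph *)
Definition capacity (R : realType) (n : nat) : R := ((2 * n - 1)%N%:R)^-1.

(* a routing: finite collection of (path, demand) pairs; a path is (e0, es) *)
Definition routing_ok {R : realType} {n} (G : multigraph n)
    (F : seq (('I_(size G) * seq 'I_(size G)) * R)) (A : 'M[R]_n) : Prop :=
  [/\ forall f, f \in F -> is_path G f.1.1 f.1.2,
      forall f, f \in F -> 0 <= f.2,
      forall u v : 'I_n,
        \sum_(f <- F | (path_src G f.1.1 f.1.2 == u) && (path_tgt G f.1.1 f.1.2 == v)) f.2
        = A u v &
      forall e : 'I_(size G),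
        \sum_(f <- F | e \in f.1.1 :: f.1.2) f.2 <= capacity R n].

Definition hosts {R : realType} {n} (G : multigraph n) (A : 'M[R]_n) : Prop :=
  exists F, routing_ok G F A.

Definition directly_hosts {R : realType} {n} (G : multigraph n) (A : 'M[R]_n) : Prop :=
  exists F, routing_ok G F A /\ (forall f, f \in F -> f.1.2 = [::]).

Definition throughput {R : realType} {n} (G : multigraph n) (M : 'M[R]_n) : R :=
  sup [set theta : R | hosts G (theta *: M)].

Definition weak_direct_throughput {R : realType} {n} (G : multigraph n) (M : 'M[R]_n) : R :=
  sup [set eta : R | exists M' : 'M[R]_n,
         (forall i j, 0 <= M' i j <= M i j) /\
         \sum_(i < n) \sum_(j < n) M' i j = eta * n%:R /\
         directly_hosts G M'].

Definition M1 (R : realType) : 'M[R]_2 := \matrix_(i, j) (1 / 2).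
Definition M2 (R : realType) : 'M[R]_2 :=
  \matrix_(i, j) (if i == j then 9 / 10 else 1 / 10).

From Pilot Require Import Defs.
From HB Require Import structures.
From mathcomp Require Import all_boot all_order all_algebra.
From mathcomp Require Import classical_sets reals.
From mathcomp Require Import lra zify.
Import Order.TTheory GRing.Theory Num.Theory.
Local Open Scope ring_scope.

(* Upper bounds come from weak LP duality: if nonnegative arc lengths make
   every routed u-v path at least h(u, v) long, then the h-weighted demand is
   at most the capacity 1/3 times the total arc length.  For direct hosting,
   the indicator of the arcs u -> v bounds M'(u, v) by a third of their number;
   a vertex has three out-arcs, so one of its two destinations gets at most
   one, and each row of M' carries at most 1/3 + 1/2.  For the throughput of
   M2, loops get length 2 and other arcs length 1; a path back to its start is
   then at least 2 long, whence 3.8 t <= (12 - 2k)/3 where k is the number of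
   arcs 0 -> 1, unless k = 0 and the cut {0} forces t <= 0.  The lower bounds
   are explicit routings on the graph with a loop and two parallel arcs each
   way, and on the graph with three loops at each vertex. *)

Lemma ler_sum_term {R : numDomainType} {I : finType} {P : pred I} {c : I -> R} {i} :
  (forall j, 0 <= c j) -> P i -> c i <= \sum_(j | P j) c j.
Proof.
by move=> c_ge0 Pi; rewrite (bigD1 i) //= lerDl sumr_ge0.
Qed.

Lemma ler_sum_term2 {R : numDomainType} {I : finType} {P : pred I} {c : I -> R} {i j} :
  (forall k, 0 <= c k) -> P i -> P j -> i != j -> c i + c j <= \sum_(k | P k) c k.
Proof.
move=> c_ge0 Pi Pj nij; rewrite (bigD1 i) //= lerD2l.
by apply: ler_sum_term => //=; rewrite Pj eq_sym nij.
Qed.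

Lemma natr_count (R : pzSemiRingType) (T : Type) (P : pred T) (s : seq T) :
  (count P s)%:R = \sum_(x <- s) (P x)%:R :> R.
Proof.
by rewrite -sum1_count natr_sum big_mkcond; apply: eq_bigr => x _; case: (P x).
Qed.

Lemma sum_seq_count (R : pzSemiRingType) (T : finType) (s : seq T) (w : T -> R) :
  \sum_(x <- s) w x = \sum_(p : T) (count_mem p s)%:R * w p.
Proof.
rewrite (partition_big id xpredT) //=; apply: eq_bigr => p _.
transitivity (\sum_(x <- s | x == p) w p); first by apply: eq_bigr => x /eqP ->.
by rewrite -[in RHS]sum1_count natr_sum mulr_suml; apply: eq_bigr => x _; rewrite mul1r.
Qed.

Definition loop_weight {R : pzSemiRingType} {T : eqType} (u v : T) : R :=
  if u == v then 2 else 1.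

Lemma capacity_ge0 (R : realType) (n : nat) : 0 <= capacity R n.
Proof. by rewrite invr_ge0 ler0n. Qed.

Section RoutingBounds.

Context {R : realType} {n : nat} {G : multigraph n}.
Implicit Types (F : seq (('I_(size G) * seq 'I_(size G)) * R)) (A : 'M[R]_n).

Local Notation src f := (path_src G f.1.1 f.1.2).
Local Notation tgt f := (path_tgt G f.1.1 f.1.2).

Lemma sum_arcs (w : 'I_n * 'I_n -> R) :
  \sum_(e : 'I_(size G)) w (Defs.arc G e) = \sum_(a <- G) w a.
Proof. by rewrite (big_tnth _ _ G). Qed.

Lemma routing_sum_demands {F A} (h : 'I_n -> 'I_n -> R) : routing_ok G F A ->
  \sum_u \sum_v h u v * A u v = \sum_(f <- F) f.2 * h (src f) (tgt f).
Proof.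
case=> _ _ demands _; rewrite pair_bigA /= (partition_big (fun f => (src f, tgt f)) xpredT) //=.
apply: eq_bigr => -[u v] _ /=; rewrite -demands mulr_sumr.
rewrite (eq_bigl (fun f => (src f == u) && (tgt f == v))) => [|f]; last by rewrite xpair_eqE.
by apply: eq_bigr => f /andP[/eqP -> /eqP ->]; rewrite mulrC.
Qed.

Lemma sum_path_loads F (c : 'I_(size G) -> R) :
  \sum_(f <- F) f.2 * \sum_(e in f.1.1 :: f.1.2) c e
  = \sum_e c e * \sum_(f <- F | e \in f.1.1 :: f.1.2) f.2.
Proof.
under eq_bigr => f _ do rewrite mulr_sumr big_mkcond /=.
rewrite exchange_big /=; apply: eq_bigr => e _.
rewrite mulr_sumr [RHS]big_mkcond /=; apply: eq_bigr => f _.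
by case: ifP; rewrite ?mulr0 // mulrC.
Qed.

Lemma routing_weighted_bound {F A} (c : 'I_(size G) -> R) (h : 'I_n -> 'I_n -> R) :
  routing_ok G F A -> (forall e, 0 <= c e) ->
  (forall f, f \in F -> h (src f) (tgt f) <= \sum_(e in f.1.1 :: f.1.2) c e) ->
  \sum_u \sum_v h u v * A u v <= capacity R n * \sum_e c e.
Proof.
move=> ok c_ge0 h_le; rewrite (routing_sum_demands h ok).
have [_ d_ge0 _ cap] := ok.
apply: (@le_trans _ _ (\sum_(f <- F) f.2 * \sum_(e in f.1.1 :: f.1.2) c e)).
  by rewrite !big_seq; apply: ler_sum => f Ff; rewrite ler_wpM2l ?d_ge0 ?h_le.
rewrite sum_path_loads mulr_sumr; apply: ler_sum => e _.
by rewrite mulrC ler_wpM2r.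
Qed.

Lemma path_leaves_set {S : pred 'I_n} {e0 es} : is_path G e0 es ->
  path_src G e0 es \in S -> path_tgt G e0 es \notin S ->
  exists2 e, e \in e0 :: es & ((Defs.arc G e).1 \in S) && ((Defs.arc G e).2 \notin S).
Proof.
elim: es e0 => [|e1 es IH] e0 /=.
  by rewrite /path_src /path_tgt /= => _ S1 S2; exists e0; rewrite ?mem_head ?S1.
rewrite /is_path /= => /andP[/eqP e01 p1] S1 S2.
case S02: ((Defs.arc G e0).2 \in S); last by exists e0; rewrite ?mem_head ?S1 ?S02.
have [|//|e e_in He] := IH e1 p1; first by rewrite /path_src -e01.
by exists e; rewrite // in_cons e_in orbT.
Qed.

Lemma closed_path_loop_or_two_arcs {e0 es} : is_path G e0 es ->
  path_src G e0 es = path_tgt G e0 es ->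
  (Defs.arc G e0).1 = (Defs.arc G e0).2 \/ exists2 e, e \in es & e != e0.
Proof.
case: es => [|e1 es]; first by rewrite /path_src /path_tgt /=; left.
rewrite /is_path /= => /andP[/eqP e01 _] _.
case: (eqVneq e1 e0) => [e10|]; last by right; exists e1; rewrite ?mem_head.
by left; rewrite e01 e10.
Qed.

Lemma hosts_total_demand {A} : hosts G A ->
  \sum_u \sum_v A u v <= capacity R n * (size G)%:R.
Proof.
move=> [F ok]; have := routing_weighted_bound (fun=> 1) (fun _ _ => 1) ok.
rewrite sumr_const card_ord; under eq_bigr do under eq_bigr do rewrite mul1r.
apply=> // f _; exact: (ler_sum_term (fun=> ler01) (mem_head _ _)).
Qed.

Lemma hosts_cut_demand (S : pred 'I_n) {A} : hosts G A ->
  \sum_u \sum_v ((u \in S) && (v \notin S))%:R * A u v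
  <= capacity R n * \sum_(a <- G) ((a.1 \in S) && (a.2 \notin S))%:R.
Proof.
move=> [F ok]; have [paths _ _ _] := ok.
rewrite -sum_arcs; apply: (routing_weighted_bound _ _ ok) => [e|f Ff]; first exact: ler0n.
have [/andP[Ss St]|_] := boolP ((src f \in S) && (tgt f \notin S)); last exact: sumr_ge0.
have [e e_in cross] := path_leaves_set (paths f Ff) Ss St.
by apply: le_trans (ler_sum_term (fun e => ler0n _ _) e_in); rewrite cross.
Qed.

(* A path back to its source is a self-loop or uses two distinct arcs. *)
Lemma hosts_loop_weighted_demand {A} : hosts G A ->
  \sum_u \sum_v loop_weight u v * A u v
  <= capacity R n * \sum_(a <- G) loop_weight a.1 a.2.
Proof.
move=> [F ok]; have [paths _ _ _] := ok.
have w_ge1 e : 1 <= loop_weight (R := R) (Defs.arc G e).1 (Defs.arc G e).2.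
  by rewrite /loop_weight; case: ifP; rewrite ?ler1n.
have w_ge0 e := le_trans ler01 (w_ge1 e).
rewrite -sum_arcs; apply: (routing_weighted_bound _ _ ok) => // f Ff.
have w_e0 := le_trans (w_ge1 _) (ler_sum_term w_ge0 (mem_head f.1.1 f.1.2)).
rewrite /loop_weight; case: eqVneq => [closed|_] //.
case: (closed_path_loop_or_two_arcs (paths f Ff) closed) => [loop|[e e_in ne]].
  apply: le_trans (ler_sum_term w_ge0 (mem_head _ _)).
  by rewrite /loop_weight loop eqxx.
have e_mem : e \in f.1.1 :: f.1.2 by rewrite in_cons e_in orbT.
apply: le_trans (ler_sum_term2 w_ge0 e_mem (mem_head _ _) ne).
by have := w_ge1 e; have := w_ge1 f.1.1; lra.
Qed.

Lemma directly_hosts_entry {A} u v : directly_hosts G A ->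
  A u v <= capacity R n * (count_mem (u, v) G)%:R.
Proof.
move=> [F [ok direct]].
have := routing_weighted_bound (fun e => (Defs.arc G e == (u, v))%:R)
  (fun x y => ((x, y) == (u, v))%:R) ok.
rewrite natr_count (sum_arcs (fun a => (a == (u, v))%:R)) pair_bigA /=.
rewrite (bigD1 (u, v)) //= eqxx mul1r big1 ?addr0; last first.
  by move=> p /negbTE; rewrite -surjective_pairing => ->; rewrite mul0r.
apply=> [e|f Ff]; first exact: ler0n.
apply: le_trans (ler_sum_term (fun e => ler0n _ _) (mem_head _ _)).
by rewrite /path_src /path_tgt (direct f Ff) /= -surjective_pairing.
Qed.

Lemma directly_hosts0 : directly_hosts G (0 : 'M[R]_n).
Proof.
exists [::]; split=> //; split=> // [u v|e]; rewrite big_nil ?mxE //.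
exact: capacity_ge0.
Qed.

End RoutingBounds.

Notation v0 := (@ord0 1).
Notation v1 := (@ord_max 1).

Lemma ord2P (i : 'I_2) : i = v0 \/ i = v1.
Proof. by case: i => -[|[|k]] i_lt2; [left|right|]; try apply: val_inj. Qed.

Lemma v01 : (v0 == v1) = false. Proof. by []. Qed.
Lemma v10 : (v1 == v0) = false. Proof. by []. Qed.

Lemma sum_ord2 (R : nmodType) (F : 'I_2 -> R) : \sum_i F i = F v0 + F v1.
Proof.
by rewrite big_ord_recr big_ord1 /=; congr (F _ + F _); apply: val_inj.
Qed.

Lemma capacity2 (R : realType) : capacity R 2 = 1 / 3.
Proof. by rewrite /capacity div1r. Qed.

Section TwoVertices.

Variables (R : realType) (G : multigraph 2).
Local Notation c p := ((count_mem p G)%:R : R).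

Lemma sum_multigraph2 (w : 'I_2 * 'I_2 -> R) :
  \sum_(a <- G) w a = c (v0, v0) * w (v0, v0) + c (v0, v1) * w (v0, v1)
                      + c (v1, v0) * w (v1, v0) + c (v1, v1) * w (v1, v1).
Proof.
rewrite sum_seq_count (eq_bigr (fun p => c (p.1, p.2) * w (p.1, p.2))) => [|[] //].
rewrite -(pair_bigA _ (fun i j => c (i, j) * w (i, j))) /=.
by rewrite !sum_ord2 addrA.
Qed.

Lemma dregular2_counts : dregular G 3 ->
  [/\ c (v0, v0) + c (v0, v1) = 3, c (v1, v0) + c (v1, v1) = 3,
      c (v0, v0) + c (v1, v0) = 3 & c (v0, v1) + c (v1, v1) = 3].
Proof.
move=> reg; have [out0 in0] := reg v0; have [out1 in1] := reg v1.
have count3 P : count P G = 3%N -> \sum_(a <- G) (P a)%:R = 3 :> R.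
  by move=> <-; rewrite natr_count.
move: (count3 _ out0) (count3 _ in0) (count3 _ out1) (count3 _ in1).
rewrite !sum_multigraph2 /= ?v01 ?v10 ?eqxx /= ?mulr1 ?mulr0 ?addr0 ?add0r.
by split.
Qed.

End TwoVertices.

Lemma direct_row_bound {R : realFieldType} {a b : nat} {x y : R} :
  a%:R + b%:R = 3 :> R -> x <= 1 / 2 -> y <= 1 / 2 ->
  x <= a%:R / 3 -> y <= b%:R / 3 -> x + y <= 5 / 6.
Proof.
rewrite -natrD => /eqP; rewrite (eqr_nat R _ 3) => /eqP ab3 x_le y_le xa yb.
have [a_le1|b_le1] : (a <= 1)%N \/ (b <= 1)%N by lia.
- by have := a_le1; rewrite -(ler_nat R) => ?; lra.
- by have := b_le1; rewrite -(ler_nat R) => ?; lra.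
Qed.

Section Throughputs.

Variable R : realType.

Lemma weak_direct_throughput_M1_le (G : multigraph 2) : dregular G 3 ->
  weak_direct_throughput G (M1 R) <= 5 / 6.
Proof.
move=> /(dregular2_counts R) [out0 out1 _ _].
apply: ge_sup.
  exists 0, 0; split=> [i j|]; first by rewrite !mxE; lra.
  by rewrite !sum_ord2 !mxE mul0r !addr0; split=> //; exact: directly_hosts0.
move=> eta [M' [bounds [sum_eta direct]]].
have half i j : M' i j <= 1 / 2 by have /andP[_] := bounds i j; rewrite mxE.
have entry u v : M' u v <= (count_mem (u, v) G)%:R / 3.
  by have := directly_hosts_entry u v direct; rewrite capacity2; lra.
have := direct_row_bound out0 (half _ _) (half _ _) (entry v0 v0) (entry v0 v1).
have := direct_row_bound out1 (half _ _) (half _ _) (entry v1 v0) (entry v1 v1).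
by move: sum_eta; rewrite !sum_ord2; lra.
Qed.

Lemma throughput_M2_le (G : multigraph 2) : dregular G 3 ->
  throughput G (M2 R) <= 8 / 9.
Proof.
move=> /(dregular2_counts R) [out0 out1 in0 in1].
apply: ge_sup => [|t hosts_t].
  exists 0; rewrite /= scale0r; have [F [ok _]] := directly_hosts0 (R := R) (G := G); by exists F.
case k01: (count_mem (v0, v1) G) => [|k].
  have := hosts_cut_demand (pred1 v0) hosts_t.
  rewrite sum_multigraph2 !sum_ord2 !mxE /= ?v01 ?v10 ?eqxx /= k01 capacity2.
  lra.
have k01_ge1 : 1 <= (count_mem (v0, v1) G)%:R :> R by rewrite k01 ler1n.
have := hosts_loop_weighted_demand hosts_t.
rewrite sum_multigraph2 !sum_ord2 !mxE /loop_weight /= ?v01 ?v10 ?eqxx /= capacity2.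
lra.
Qed.

Definition mixed_graph : multigraph 2 :=
  [:: (v0, v0); (v1, v1); (v0, v1); (v0, v1); (v1, v0); (v1, v0)].

(* Each vertex serves 1/3 of its self-demand 4/9 on its loop and the remaining
   1/9 around a 2-cycle; the cross demands 4/9 are split over parallel arcs. *)
Definition mixed_routing : seq (('I_(size mixed_graph) * seq 'I_(size mixed_graph)) * R) :=
  [:: ((@Ordinal 6 0 isT, [::]), 1 / 3); ((@Ordinal 6 1 isT, [::]), 1 / 3);
      ((@Ordinal 6 2 isT, [:: @Ordinal 6 4 isT]), 1 / 9);
      ((@Ordinal 6 5 isT, [:: @Ordinal 6 3 isT]), 1 / 9);
      ((@Ordinal 6 2 isT, [::]), 2 / 9); ((@Ordinal 6 3 isT, [::]), 2 / 9);
      ((@Ordinal 6 4 isT, [::]), 2 / 9); ((@Ordinal 6 5 isT, [::]), 2 / 9)].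

Lemma mixed_graph_regular : dregular mixed_graph 3.
Proof. by move=> v; case: (ord2P v) => ->. Qed.

Lemma mixed_routing_ok : routing_ok mixed_graph mixed_routing ((8 / 9) *: M1 R).
Proof.
split.
- by apply/allP.
- by move=> f; do 8 (case/predU1P => [-> /=|]; first lra).
- move=> u v; case: (ord2P u) => ->; case: (ord2P v) => ->;
    by rewrite !big_cons big_nil /= !mxE; lra.
- case=> [[|[|[|[|[|[|k]]]]]] k_lt] //; rewrite capacity2 !big_cons big_nil /= ?inE /=; lra.
Qed.

Lemma throughput_mixed_graph_M1 : 8 / 9 <= throughput mixed_graph (M1 R).
Proof.
apply: ub_le_sup; last by exists mixed_routing; exact: mixed_routing_ok.
exists 1 => t /hosts_total_demand.
by rewrite !sum_ord2 !mxE capacity2 /=; lra.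
Qed.

Definition loop_graph : multigraph 2 :=
  [:: (v0, v0); (v0, v0); (v0, v0); (v1, v1); (v1, v1); (v1, v1)].

Definition loop_routing : seq (('I_(size loop_graph) * seq 'I_(size loop_graph)) * R) :=
  [:: ((@Ordinal 6 0 isT, [::]), 3 / 10); ((@Ordinal 6 1 isT, [::]), 3 / 10);
      ((@Ordinal 6 2 isT, [::]), 3 / 10); ((@Ordinal 6 3 isT, [::]), 3 / 10);
      ((@Ordinal 6 4 isT, [::]), 3 / 10); ((@Ordinal 6 5 isT, [::]), 3 / 10)].

Definition loop_demands : 'M[R]_2 := \matrix_(i, j) (if i == j then 9 / 10 else 0).

Lemma loop_graph_regular : dregular loop_graph 3.
Proof. by move=> v; case: (ord2P v) => ->. Qed.

Lemma loop_routing_ok : routing_ok loop_graph loop_routing loop_demands.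
Proof.
split.
- by apply/allP.
- by move=> f; do 6 (case/predU1P => [-> /=|]; first lra).
- move=> u v; case: (ord2P u) => ->; case: (ord2P v) => ->;
    by rewrite !big_cons big_nil /= !mxE /=; lra.
- case=> [[|[|[|[|[|[|k]]]]]] k_lt] //; rewrite capacity2 !big_cons big_nil /= ?inE /=; lra.
Qed.

Lemma weak_direct_throughput_loop_graph_M2 :
  9 / 10 <= weak_direct_throughput loop_graph (M2 R).
Proof.
apply: ub_le_sup.
  exists 1 => eta [M' [bounds [sum_eta _]]].
  have le_M2 i j : M' i j <= M2 R i j by have /andP[] := bounds i j.
  move: sum_eta (le_M2 v0 v0) (le_M2 v0 v1) (le_M2 v1 v0) (le_M2 v1 v1).
  by rewrite !sum_ord2 !mxE /= ?v01 ?v10 ?eqxx /=; lra.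
exists loop_demands; split=> [i j|].
  by rewrite !mxE; case: (i == j); apply/andP; split; lra.
split; first by rewrite !sum_ord2 !mxE /=; lra.
exists loop_routing; split; first exact: loop_routing_ok.
by move=> f; do 6 (case/predU1P => [-> //|]).
Qed.

End Throughputs.

Theorem mainTheorem4 (R : realType) :
  ((exists G : multigraph 2, dregular G 3 /\ 8 / 9 <= throughput G (M1 R)) /\
   (forall G : multigraph 2, dregular G 3 -> weak_direct_throughput G (M1 R) <= 5 / 6)) /\
  ((exists G : multigraph 2, dregular G 3 /\ 9 / 10 <= weak_direct_throughput G (M2 R)) /\
   (forall G : multigraph 2, dregular G 3 -> throughput G (M2 R) < 9 / 10)).
Proof.
split; split.
- exists mixed_graph; split; [exact: mixed_graph_regular | exact: throughput_mixed_graph_M1].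
- exact: weak_direct_throughput_M1_le.
- exists loop_graph; split; [exact: loop_graph_regular | exact: weak_direct_throughput_loop_graph_M2].
- move=> G /throughput_M2_le le89; apply: le_lt_trans (le89 R) _; lra.
Qed.
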